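(* Let $n\ge 1$, $V=(\mathbb{Z}/2\mathbb{Z})^n$ with standard basis $e_1,\dots,e_n$ and standard inner product $\langle (x_i),(y_i)\rangle=\sum_i x_iy_i$, and let $\mathcal{O}$ be the group of linear automorphisms of $V$ preserving this inner product. For integers $k\ge 1$ and $1\le i_1<i_2<\cdots<i_{2k}\le n$, let $R(i_1,\dots,i_{2k})$ be the linear map of $V$ defined by $R(e_{i_j})=\sum_{l\neq j}e_{i_l}$ for $1\le j\le 2k$ (sum over $l\in\{1,\dots,2k\}\setminus\{j\}$) and $R(e_m)=e_m$ for $m\notin\{i_1,\dots,i_{2k}\}$. Then each $R(i_1,\dots,i_{2k})$ is an involution in $\mathcal{O}$, and $\mathcal{O}$ is generated by the set of all such involutions $R(i_1,\dots,i_{2k})$. *)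

From mathcomp Require Import all_boot all_order all_algebra.
Set Implicit Arguments. Unset Strict Implicit. Unset Printing Implicit Defensive.
Import GRing.Theory.
Local Open Scope ring_scope.

(* V = (Z/2Z)^n realised as row vectors 'rV['F_2]_n; a linear map of V is a
   matrix A acting on the right, v |-> v *m A, so row i of A is the image of e_i. *)

Definition ip (n : nat) (x y : 'rV['F_2]_n) : 'F_2 := \sum_(i < n) x 0 i * y 0 i.

Definition in_O (n : nat) (A : 'M['F_2]_n) : Prop :=
  A \in unitmx /\ forall x y : 'rV['F_2]_n, ip (x *m A) (y *m A) = ip x y.

(* index sets {i_1 < ... < i_2k} with k >= 1, as subsets of 'I_n of even positive size *)
Definition R_index (n : nat) (S : {set 'I_n}) : bool := (0 < #|S|)%N && ~~ odd #|S|.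

Definition Rmx (n : nat) (S : {set 'I_n}) : 'M['F_2]_n :=
  \matrix_(i < n, j < n)
    (if i \in S then ((j \in S) && (j != i))%:R else (i == j)%:R).

Inductive gen_by (n : nat) (P : 'M['F_2]_n -> Prop) : 'M['F_2]_n -> Prop :=
  | gen_one : gen_by P 1%:M
  | gen_in A : P A -> gen_by P A
  | gen_mul A B : gen_by P A -> gen_by P B -> gen_by P (A *m B)
  | gen_inv A : gen_by P A -> gen_by P (invmx A).

From mathcomp Require Import all_boot all_order all_algebra.

Set Implicit Arguments.
Unset Strict Implicit.
Unset Printing Implicit Defensive.

Import GRing.Theory.
Local Open Scope ring_scope.

(* With [s] the indicator row of [S], [x *m R(S)] is [x + <x, s> s], an involutive
   isometry as soon as [<s, s> = #|S|] vanishes in F_2.  Conversely, an orthogonal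
   [A] is brought to the identity by right multiplications with such [R(S)],
   turning one row at a time into the corresponding unit vector while leaving the
   rows [i] already equal to [e_i] alone (the sets [S] used avoid those [i]).  If
   row [j] is [v] with [v_j = 0], then [u = v + e_j] is isotropic with
   [<v, u> = 1], so [R(supp u)] sends [v] to [e_j].  If [v_j = 1], a first
   [R({j, w})] with [w] a non-unit row and [v_w = 0] makes [v_j = 0].  Such a [w]
   exists: otherwise [v] is [1] exactly on the non-unit rows, where every other
   row is supported, so a non-unit row [k <> j] with [v_k = 1] would satisfy
   [<v, row k> = <row k, row k> = 1]. *)

Lemma F2_cases (x : 'F_2) : x = 0 \/ x = 1.
Proof. by case: x => [[|[|k]] //= lt_k2]; [left | right]; apply/val_inj. Qed.

Lemma pchar_F2 : 2%N \in [pchar 'F_2].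
Proof. exact: pchar_Fp. Qed.

Lemma mulF2_idem (x : 'F_2) : x * x = x.
Proof. by have [->|->] := F2_cases x; rewrite ?mulr0 ?mulr1. Qed.

Lemma natF2_odd m : (m%:R : 'F_2) = (odd m)%:R.
Proof. by rewrite -modn2 -Fp_nat_mod. Qed.

Lemma natF2_neq0 (x : 'F_2) : (x != 0)%:R = x.
Proof. by have [->|->] := F2_cases x; rewrite ?eqxx // oner_eq0. Qed.

Lemma F2_neq0 (x : 'F_2) : x != 0 -> x = 1.
Proof. by have [->|->] := F2_cases x; rewrite ?eqxx. Qed.

Section OrthogonalF2.
Variable n : nat.
Implicit Types (x y z u v : 'rV['F_2]_n) (S : {set 'I_n}) (A B : 'M['F_2]_n).

Lemma addv_pchar2 x : x + x = 0.
Proof. by apply/rowP => i; rewrite !mxE (addrr_pchar2 pchar_F2). Qed.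

Lemma ipC x y : ip x y = ip y x.
Proof. by apply: eq_bigr => i _; rewrite mulrC. Qed.

Lemma ipDl x y z : ip (x + y) z = ip x z + ip y z.
Proof. by rewrite /ip -big_split; apply: eq_bigr => i _; rewrite mxE mulrDl. Qed.

Lemma ipDr x y z : ip x (y + z) = ip x y + ip x z.
Proof. by rewrite ipC ipDl !(ipC x). Qed.

Lemma ipZl a x y : ip (a *: x) y = a * ip x y.
Proof. by rewrite /ip mulr_sumr; apply: eq_bigr => i _; rewrite mxE mulrA. Qed.

Lemma ipZr a x y : ip x (a *: y) = a * ip x y.
Proof. by rewrite ipC ipZl ipC. Qed.

Lemma ip_delta x j : ip x 'e_j = x 0 j.
Proof.
rewrite /ip (bigD1 j) //= big1 ?addr0 => [|i /negbTE neq_ij]; rewrite mxE.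
  by rewrite !eqxx mulr1.
by rewrite neq_ij andbF mulr0.
Qed.

Lemma delta_rowE (i j : 'I_n) : (delta_mx 0 i : 'rV['F_2]_n) 0 j = (i == j)%:R.
Proof. by rewrite mxE eq_sym. Qed.

Lemma ip_mxE x y : ip x y = (x *m y^T) 0 0.
Proof. by rewrite mxE; apply: eq_bigr => i _; rewrite mxE. Qed.

Definition indicator S : 'rV['F_2]_n := \row_i (i \in S)%:R.

Definition row_support u : {set 'I_n} := [set i | u 0 i != 0].

Lemma indicator_row_support u : indicator (row_support u) = u.
Proof. by apply/rowP => i; rewrite mxE inE natF2_neq0. Qed.

Lemma ip_indicator S : ip (indicator S) (indicator S) = #|S|%:R.
Proof.
rewrite /ip -sum1_card natr_sum [RHS]big_mkcond /=; apply: eq_bigr => i _.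
by rewrite mxE mulF2_idem; case: (i \in S).
Qed.

Lemma R_index_isotropic S : R_index S -> ip (indicator S) (indicator S) = 0.
Proof. by case/andP=> _ even_S; rewrite ip_indicator natF2_odd (negbTE even_S). Qed.

Lemma R_index_row_support u : u != 0 -> ip u u = 0 -> R_index (row_support u).
Proof.
move=> nz_u iso_u; apply/andP; split.
  rewrite card_gt0; apply: contraNneq nz_u => supp0.
  by rewrite -(indicator_row_support u) supp0; apply/eqP/rowP => i; rewrite !mxE inE.
apply/negP => odd_supp; move: iso_u.
rewrite -(indicator_row_support u) ip_indicator natF2_odd odd_supp.
by move/eqP; rewrite oner_eq0.
Qed.

Lemma RmxE S : Rmx S = 1%:M + (indicator S)^T *m indicator S.
Proof.
apply/matrixP => i j; rewrite !mxE big_ord1 !mxE.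
case: (boolP (i \in S)) => iS; case: (boolP (j \in S)) => jS /=;
  rewrite ?mulr1 ?mulr0 ?mul0r ?addr0 //.
  by rewrite eq_sym; case: eqP; rewrite /= ?(addrr_pchar2 pchar_F2) ?add0r.
by case: eqP => // eq_ij; move: jS; rewrite -eq_ij iS.
Qed.

Lemma mul_Rmx x S : x *m Rmx S = x + ip x (indicator S) *: indicator S.
Proof.
by rewrite RmxE mulmxDr mulmx1 mulmxA [x *m _]mx11_scalar mul_scalar_mx ip_mxE.
Qed.

Lemma mul_Rmx_row_support x u : x *m Rmx (row_support u) = x + ip x u *: u.
Proof. by rewrite mul_Rmx indicator_row_support. Qed.

Section Involution.
Variable S : {set 'I_n}.
Hypothesis RS : R_index S.

Lemma ip_Rmx x y : ip (x *m Rmx S) (y *m Rmx S) = ip x y.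
Proof.
rewrite !mul_Rmx !ipDl !ipDr !ipZl !ipZr R_index_isotropic // !mulr0 addr0.
by rewrite (ipC (indicator S) y) mulrC -addrA (addrr_pchar2 pchar_F2) addr0.
Qed.

Lemma RmxK : Rmx S *m Rmx S = 1%:M.
Proof.
apply/row_matrixP => i; rewrite !rowE mulmxA mulmx1 !mul_Rmx ipDl ipZl.
rewrite R_index_isotropic // mulr0 addr0 -addrA -scalerDl.
by rewrite (addrr_pchar2 pchar_F2) scale0r addr0.
Qed.

Lemma Rmx_neq1 : Rmx S != 1%:M.
Proof.
case/andP: RS => S_gt0 even_S.
have : (1 < #|S|)%N by move: S_gt0 even_S; case: #|S| => [|[|k]].
case/card_gt1P=> i [j [iS jS neq_ij]]; apply/negP => /eqP/matrixP/(_ i j).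
by rewrite !mxE iS jS eq_sym neq_ij (negbTE neq_ij) => /eqP; rewrite oner_eq0.
Qed.

Lemma Rmx_in_O : in_O (Rmx S).
Proof. by split; [case: (mulmx1_unit RmxK) | exact: ip_Rmx]. Qed.

End Involution.

Lemma in_O1 : in_O (1%:M : 'M['F_2]_n).
Proof. by split; [exact: unitmx1 | move=> x y; rewrite !mulmx1]. Qed.

Lemma in_O_mul A B : in_O A -> in_O B -> in_O (A *m B).
Proof.
move=> [uA ipA] [uB ipB]; split; first by rewrite unitmx_mul uA.
by move=> x y; rewrite !mulmxA ipB ipA.
Qed.

Lemma in_O_inv A : in_O A -> in_O (invmx A).
Proof.
move=> [uA ipA]; split; first by rewrite unitmx_inv.
by move=> x y; rewrite -ipA !mulmxKV.
Qed.

Definition is_Rmx B := exists2 S, R_index S & B = Rmx S.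

Lemma gen_by_in_O A : gen_by is_Rmx A -> in_O A.
Proof.
elim=> [|_ [S RS ->]|B C _ OB _ OC|B _ OB].
- exact: in_O1.
- exact: Rmx_in_O.
- exact: in_O_mul.
- exact: in_O_inv.
Qed.

Lemma gen_by_mulRmx A S : R_index S -> gen_by is_Rmx (A *m Rmx S) -> gen_by is_Rmx A.
Proof.
move=> RS genAR; have := gen_mul genAR (gen_in (ex_intro2 _ _ S RS erefl)).
by rewrite -mulmxA RmxK // mulmx1.
Qed.

Definition orthonormal A := forall i j, ip (row i A) (row j A) = (i == j)%:R.

Lemma in_O_orthonormal A : in_O A -> orthonormal A.
Proof. by move=> [_ ipA] i j; rewrite !rowE ipA ip_delta delta_rowE. Qed.

Definition fixed_rows A := [set i | row i A == 'e_i].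

Lemma fixed_rows_col A i j :
  orthonormal A -> i \in fixed_rows A -> i != j -> A j i = 0.
Proof.
move=> onA; rewrite inE => /eqP fix_i neq_ij.
by move: (onA j i); rewrite fix_i ip_delta mxE eq_sym (negbTE neq_ij).
Qed.

Lemma disjoint_fixed_row_support A u :
    (forall i, i \in fixed_rows A -> u 0 i = 0) ->
  [disjoint fixed_rows A & row_support u].
Proof.
move=> u0; rewrite disjoints_subset; apply/subsetP => i /u0 ui.
by rewrite !inE ui eqxx.
Qed.

Lemma mulRmx_reduces A S :
    orthonormal A -> R_index S -> [disjoint fixed_rows A & S] ->
  [/\ orthonormal (A *m Rmx S), fixed_rows A \subset fixed_rows (A *m Rmx S)
    & gen_by is_Rmx (A *m Rmx S) -> gen_by is_Rmx A].
Proof.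
move=> onA RS disjAS; split; last exact: gen_by_mulRmx.
  by move=> i j; rewrite !row_mul ip_Rmx.
apply/subsetP => i fix_i; have iNS : i \notin S by rewrite (disjointFr disjAS).
move: fix_i; rewrite !inE row_mul mul_Rmx => /eqP->.
by rewrite ipC ip_delta mxE (negbTE iNS) scale0r addr0.
Qed.

Lemma fix_row_zero_diag A j : orthonormal A -> A j j = 0 ->
  exists2 S, R_index S & [disjoint fixed_rows A & S] /\ j \in fixed_rows (A *m Rmx S).
Proof.
move=> onA Ajj; set v := row j A; set u := v + 'e_j.
have vj : v 0 j = 0 by rewrite mxE.
have vu : ip v u = 1 by rewrite ipDr onA eqxx ip_delta vj addr0.
have uj : u 0 j = 1 by rewrite mxE vj delta_rowE eqxx add0r.
have uu : ip u u = 0.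
  by rewrite ipDl vu ipC ip_delta uj (addrr_pchar2 pchar_F2).
have nz_u : u != 0 by apply: contra_eq_neq uj => ->; rewrite mxE eq_sym oner_eq0.
exists (row_support u); first exact: R_index_row_support.
split.
  have unfixed_j : j \notin fixed_rows A.
    rewrite inE -/v; apply: contra_eqN vj => /eqP->.
    by rewrite delta_rowE eqxx oner_eq0.
  apply: disjoint_fixed_row_support => i fix_i.
  have neq_ij : i != j by apply: contraNneq unfixed_j => <-.
  by rewrite mxE mxE fixed_rows_col // delta_rowE eq_sym (negbTE neq_ij) addr0.
by rewrite inE row_mul mul_Rmx_row_support vu scale1r addrA addv_pchar2 add0r.
Qed.

Lemma exists_unfixed_zero A j : orthonormal A -> j \notin fixed_rows A -> A j j = 1 ->
  exists2 w, w \notin fixed_rows A & A j w = 0.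
Proof.
move=> onA unfixed_j Ajj.
case: (pickP [pred w | (w \notin fixed_rows A) && (A j w == 0)]) => [w /andP[]|none].
  by move=> unfixed_w /eqP; exists w.
have [k Ajk] : exists k, A j k != (j == k)%:R.
  apply/existsP; apply: contraR unfixed_j => /existsPn same.
  by rewrite inE; apply/eqP/rowP => k; rewrite mxE delta_rowE; apply/eqP/negPn.
have neq_jk : j != k by apply: contraNneq Ajk => <-; rewrite Ajj eqxx.
move: Ajk; rewrite (negbTE neq_jk) => /F2_neq0 Ajk.
have unfixed_k : k \notin fixed_rows A.
  apply/negP => fix_k; have : A j k = 0 by apply: fixed_rows_col; rewrite // eq_sym.
  by rewrite Ajk => /eqP; rewrite oner_eq0.
have : ip (row j A) (row k A) = ip (row k A) (row k A).
  apply: eq_bigr => i _; rewrite !mxE.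
  have [fix_i|unfixed_i] := boolP (i \in fixed_rows A).
    have neq_ik : i != k by apply: contraNneq unfixed_k => <-.
    by rewrite (fixed_rows_col (j := k)) // !mulr0.
  move/negbT: (none i); rewrite /= unfixed_i => /F2_neq0->.
  by rewrite mul1r mulF2_idem.
by rewrite !onA eqxx (negbTE neq_jk) => /eqP; rewrite eq_sym oner_eq0.
Qed.

Lemma clear_unit_diag A j : orthonormal A -> j \notin fixed_rows A -> A j j = 1 ->
  exists2 S, R_index S & [disjoint fixed_rows A & S] /\ (A *m Rmx S) j j = 0.
Proof.
move=> onA unfixed_j Ajj.
have [w unfixed_w Ajw] := exists_unfixed_zero onA unfixed_j Ajj.
have neq_jw : j != w by apply: contra_eq_neq Ajw => <-; rewrite Ajj oner_eq0.
pose u : 'rV['F_2]_n := 'e_j + 'e_w.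
have uE i : u 0 i = (j == i)%:R + (w == i)%:R by rewrite mxE !delta_rowE.
have uj : u 0 j = 1 by rewrite uE eqxx eq_sym (negbTE neq_jw) addr0.
have vu : ip (row j A) u = 1 by rewrite ipDr !ip_delta !mxE Ajj Ajw addr0.
have uu : ip u u = 0.
  rewrite ipDr !ip_delta uj uE eqxx (negbTE neq_jw) add0r.
  exact: (addrr_pchar2 pchar_F2).
have nz_u : u != 0 by apply: contra_eq_neq uj => ->; rewrite mxE eq_sym oner_eq0.
exists (row_support u); first exact: R_index_row_support.
split.
  apply: disjoint_fixed_row_support => i fix_i.
  have neq_ji : j != i by apply: contraNneq unfixed_j => ->.
  have neq_wi : w != i by apply: contraNneq unfixed_w => ->.
  by rewrite uE (negbTE neq_ji) (negbTE neq_wi) addr0.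
have : row j (A *m Rmx (row_support u)) 0 j = 0.
  rewrite row_mul mul_Rmx_row_support vu scale1r mxE uj mxE Ajj.
  exact: (addrr_pchar2 pchar_F2).
by rewrite mxE.
Qed.

Lemma reduce_row A j : orthonormal A -> j \notin fixed_rows A ->
  exists B, [/\ orthonormal B, j |: fixed_rows A \subset fixed_rows B
              & gen_by is_Rmx B -> gen_by is_Rmx A].
Proof.
have reduce_zero_diag A' : orthonormal A' -> A' j j = 0 ->
    exists B, [/\ orthonormal B, j |: fixed_rows A' \subset fixed_rows B
                & gen_by is_Rmx B -> gen_by is_Rmx A'].
  move=> onA' Ajj; have [S RS [disjS fix_j]] := fix_row_zero_diag onA' Ajj.
  have [onB subB genB] := mulRmx_reduces onA' RS disjS.
  by exists (A' *m Rmx S); split; rewrite // subUset sub1set fix_j.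
move=> onA unfixed_j; have [|Ajj] := F2_cases (A j j); first exact: reduce_zero_diag.
have [S RS [disjS Ajj']] := clear_unit_diag onA unfixed_j Ajj.
have [onAS subAS genAS] := mulRmx_reduces onA RS disjS.
have [B [onB subB genB]] := reduce_zero_diag _ onAS Ajj'.
exists B; split => // [|/genB/genAS //].
exact: subset_trans (setUS _ subAS) subB.
Qed.

Lemma orthonormal_gen_by_Rmx A : orthonormal A -> gen_by is_Rmx A.
Proof.
have [k] := ubnP #|~: fixed_rows A|; elim: k A => // k IH A lt_k onA.
have [all_fixed | [j]] := set_0Vmem (~: fixed_rows A).
  suff -> : A = 1%:M by exact: gen_one.
  apply/row_matrixP => i; rewrite [RHS]rowE mulmx1; apply/eqP.
  have : i \notin ~: fixed_rows A by rewrite all_fixed inE.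
  by rewrite !inE negbK.
rewrite inE => unfixed_j; have [B [onB subB genB]] := reduce_row onA unfixed_j.
apply/genB/IH => //; rewrite -ltnS; apply: leq_trans lt_k; rewrite ltnS.
apply: proper_card; apply/properP; split.
  by rewrite setCS; apply: subset_trans subB; exact: subsetUr.
by exists j; rewrite inE ?negbK //; apply/(subsetP subB)/setU11.
Qed.

End OrthogonalF2.

Theorem theorem5p1 (n : nat) (hn : (1 <= n)%N) :
  (forall S : {set 'I_n}, R_index S ->
      Rmx S *m Rmx S = 1%:M /\ Rmx S != 1%:M /\ in_O (Rmx S)) /\
  (forall A : 'M['F_2]_n,
      in_O A <-> gen_by (fun B => exists2 S : {set 'I_n}, R_index S & B = Rmx S) A).
Proof.
split=> [S RS | A].
  by split; [exact: RmxK | split; [exact: Rmx_neq1 | exact: Rmx_in_O]].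
split=> [OA | ]; last exact: gen_by_in_O.
exact: orthonormal_gen_by_Rmx (in_O_orthonormal OA).
Qed.
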